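(* Let $r$ be even, $n=r+2$, and let $a,h_1,h_2:\mathbb F_2^r\to\mathbb F_2$. Define $\mathfrak f:\mathbb F_2^r\times\mathbb F_2^2\to\mathbb F_2$ by $\mathfrak f(x,y)=a(x)\oplus(h_1(x)\oplus y_1)(h_2(x)\oplus y_2)$. Suppose that any one of the following holds: (1) $a$ is bent, $h_1=h_2=g$ for some $g$, and $a\oplus g$ is semi-bent; (2) $a$ is bent, $h_1$ is affine, and $a\oplus h_2$ is semi-bent; (3) $W_a(u)\in\{0,\pm2^{r/2},\pm2^{(r+2)/2}\}$ for all $u$, and $h_1,h_2$ are affine; (4) $W_a(u)\in\{0,\pm2^{r/2},\pm2^{(r+2)/2}\}$ for all $u$, $h_1$ is affine, and $a\oplus h_2$ is bent or semi-bent. Then $W_{\mathfrak f}(u,v)\in\{0,\pm2^{n/2},\pm2^{(n+2)/2}\}$ for all $(u,v)\in\mathbb F_2^r\times\mathbb F_2^2$.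
   Context: $W_f(\omega)=\sum_x(-1)^{f(x)\oplus\omega\cdot x}$. For even $r$, $a:\mathbb F_2^r\to\mathbb F_2$ is bent if $|W_a(u)|=2^{r/2}$ for all $u$, and semi-bent if $W_a(u)\in\{0,\pm2^{(r+2)/2}\}$ for all $u$. Affine functions are $x\mapsto c\cdot x\oplus d$. *)

(* F_2^m is modelled as {ffun 'I_m -> bool}, F_2 as bool,
   addition in F_2 as xor (addb), multiplication as andb. *)
From mathcomp Require Import all_boot all_order all_algebra.
Set Implicit Arguments. Unset Strict Implicit. Unset Printing Implicit Defensive.
Import GRing.Theory Num.Theory.
Local Open Scope ring_scope.

Definition bvec (m : nat) := {ffun 'I_m -> bool}.

Definition dotb (m : nat) (w x : bvec m) : bool :=
  \big[addb/false]_(i < m) (w i && x i).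

Definition sgnb (b : bool) : int := if b then -1 else 1.

Definition walsh (m : nat) (f : bvec m -> bool) (w : bvec m) : int :=
  \sum_(x : bvec m) sgnb (f x (+) dotb w x).

Definition walsh2 (m k : nat) (f : bvec m -> bvec k -> bool)
    (u : bvec m) (v : bvec k) : int :=
  \sum_(x : bvec m) \sum_(y : bvec k) sgnb (f x y (+) dotb u x (+) dotb v y).

Definition is_bent (m : nat) (f : bvec m -> bool) : Prop :=
  forall u, `|walsh f u| = (2 ^+ (m %/ 2)%N)%R.

Definition is_semibent (m : nat) (f : bvec m -> bool) : Prop :=
  forall u, walsh f u \in [:: 0; 2 ^+ ((m + 2) %/ 2)%N; - 2 ^+ ((m + 2) %/ 2)%N].

Definition is_affine (m : nat) (f : bvec m -> bool) : Prop :=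
  exists (c : bvec m) (d : bool), forall x, f x = dotb c x (+) d.

Definition five_valued (w : int) (m : nat) : bool :=
  w \in [:: 0; 2 ^+ (m %/ 2)%N; - 2 ^+ (m %/ 2)%N;
            2 ^+ ((m + 2) %/ 2)%N; - 2 ^+ ((m + 2) %/ 2)%N].

Definition frak_f (r : nat) (a h1 h2 : bvec r -> bool) (x : bvec r) (y : bvec 2) : bool :=
  a x (+) ((h1 x (+) y ord0) && (h2 x (+) y (Ordinal (isT : (1 < 2)%N)))).

From mathcomp Require Import all_boot all_order all_algebra.
From mathcomp Require Import zify.
Import GRing.Theory Num.Theory.
Local Open Scope ring_scope.

(* Summing over y in F_2^2 gives
     W_f(u,v) = 2 (-1)^(v_1 v_2) W_{a + v_1 h1 + v_2 h2}(u),
   so the spectrum of f is twice the union of the spectra of a, a + h1, a + h2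
   and a + h1 + h2, which doubles {0, +-2^(r/2), +-2^((r+2)/2)} into the
   corresponding set for n = r + 2.  Adding an affine function only permutes
   and negates Walsh values, so under each of the four hypotheses the four
   spectra are of the required shape. *)

Local Notation ord_1 := (Ordinal (isT : (1 < 2)%N)).

Definition addbv {m : nat} (u c : bvec m) : bvec m := [ffun i => u i (+) c i].

Lemma dotbDl {m : nat} (u c x : bvec m) :
  dotb (addbv u c) x = dotb u x (+) dotb c x.
Proof.
rewrite /dotb -big_split /=; apply: eq_bigr => i _; rewrite ffunE.
by case: (u i); case: (c i); case: (x i).
Qed.

Lemma sgnb_addb (b d : bool) : sgnb (b (+) d) = sgnb b * sgnb d.
Proof. by case: b; case: d; rewrite /sgnb /= ?mulr1 ?mul1r ?mulrNN. Qed.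

Lemma eq_walsh {m : nat} {f g : bvec m -> bool} : f =1 g -> walsh f =1 walsh g.
Proof. by move=> fg u; apply: eq_bigr => x _; rewrite fg. Qed.

Lemma walsh_addr_affine {m : nat} (f : bvec m -> bool) (c u : bvec m) (d : bool) :
  walsh (fun x => f x (+) (dotb c x (+) d)) u = sgnb d * walsh f (addbv u c).
Proof.
rewrite /walsh mulr_sumr; apply: eq_bigr => x _.
rewrite dotbDl -sgnb_addb; congr sgnb.
by case: (f x); case: (dotb c x); case: d; case: (dotb u x).
Qed.

Definition five_valued_spectrum {m : nat} (f : bvec m -> bool) : Prop :=
  forall u, five_valued (walsh f u) m.

Lemma five_valuedN (w : int) (m : nat) : five_valued w m -> five_valued (- w) m.
Proof.
rewrite /five_valued !inE.
by move=> /orP[/eqP->|/orP[/eqP->|/orP[/eqP->|/orP[/eqP->|/eqP->]]]];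
  rewrite ?oppr0 ?opprK eqxx /= ?orbT.
Qed.

Lemma five_valued_sgnbM (w : int) (m : nat) (b : bool) :
  five_valued w m -> five_valued (sgnb b * w) m.
Proof. by case: b; rewrite /sgnb ?mul1r ?mulN1r //; apply: five_valuedN. Qed.

Lemma five_valued_double (w : int) (m : nat) :
  five_valued w m -> five_valued (2 * w) (m + 2).
Proof.
have half_m2 : ((m + 2) %/ 2 = (m %/ 2).+1)%N by rewrite divnDr // addn1.
have half_m4 : ((m + 2 + 2) %/ 2 = ((m + 2) %/ 2).+1)%N by rewrite divnDr // addn1.
rewrite /five_valued half_m4 !half_m2 !inE !exprS; move: (2 ^+ (m %/ 2)) => K.
by move=> /orP[/eqP->|/orP[/eqP->|/orP[/eqP->|/orP[/eqP->|/eqP->]]]];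
  rewrite ?mulr0 ?mulrN ?eqxx /= ?orbT.
Qed.

Lemma eq_five_valued_spectrum {m : nat} {f g : bvec m -> bool} :
  f =1 g -> five_valued_spectrum f -> five_valued_spectrum g.
Proof. by move=> fg Hf u; rewrite -(eq_walsh fg). Qed.

Lemma five_valued_spectrum_addr_affine {m : nat} {f h : bvec m -> bool} :
  is_affine h -> five_valued_spectrum f ->
  five_valued_spectrum (fun x => f x (+) h x).
Proof.
move=> [c [d hE]] Hf u.
rewrite (eq_walsh (g := fun x => f x (+) (dotb c x (+) d))) => [|x]; last by rewrite hE.
by rewrite walsh_addr_affine; apply: five_valued_sgnbM.
Qed.

Lemma bent_five_valued_spectrum {m : nat} (f : bvec m -> bool) :
  is_bent f -> five_valued_spectrum f.
Proof.
move=> Hf u; have := Hf u; rewrite /five_valued !inE.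
case: (lerP 0 (walsh f u)) => [w_ge0|w_lt0].
  by rewrite ger0_norm // => ->; rewrite eqxx orbT.
by rewrite ltr0_norm // => <-; rewrite opprK eqxx !orbT.
Qed.

Lemma semibent_five_valued_spectrum {m : nat} (f : bvec m -> bool) :
  is_semibent f -> five_valued_spectrum f.
Proof.
move=> Hf u; have := Hf u; rewrite /five_valued !inE.
by move=> /orP[/eqP->|/orP[/eqP->|/eqP->]]; rewrite eqxx /= ?orbT.
Qed.

Definition bvec2 (b0 b1 : bool) : bvec 2 :=
  [ffun i : 'I_2 => if val i == 0%N then b0 else b1].

Lemma sum_bvec2 (F : bvec 2 -> int) :
  \sum_(y : bvec 2) F y = F (bvec2 true true) + F (bvec2 true false)
                        + (F (bvec2 false true) + F (bvec2 false false)).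
Proof.
rewrite (reindex (fun p : bool * bool => bvec2 p.1 p.2)) /=.
  by rewrite -(pair_big xpredT xpredT (fun b0 b1 => F (bvec2 b0 b1))) /= !big_bool.
exists (fun y : bvec 2 => (y ord0, y ord_1)) => [[b0 b1]|y] _.
  by rewrite /bvec2 !ffunE.
apply/ffunP => i; rewrite ffunE; case: i => [[|[|k]] Hk] //=; congr (y _); exact: val_inj.
Qed.

Lemma dotb_bvec2 (v : bvec 2) (b0 b1 : bool) :
  dotb v (bvec2 b0 b1) = (v ord0 && b0) (+) (v ord_1 && b1).
Proof.
rewrite /dotb !big_ord_recl big_ord0 /bvec2 !ffunE /= addbF.
by congr (_ (+) (v _ && _)); apply: val_inj.
Qed.

Lemma walsh2_frak_f {r : nat} (a h1 h2 : bvec r -> bool) (u : bvec r) (v : bvec 2) :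
  walsh2 (frak_f a h1 h2) u v =
  2 * (sgnb (v ord0 && v ord_1) *
       walsh (fun x => a x (+) (v ord0 && h1 x) (+) (v ord_1 && h2 x)) u).
Proof.
rewrite /walsh2 /walsh mulr_sumr mulr_sumr; apply: eq_bigr => x _.
rewrite sum_bvec2 /frak_f !dotb_bvec2 /bvec2 !ffunE /=.
case: (v ord0); case: (v ord_1); case: (a x); case: (h1 x); case: (h2 x);
  case: (dotb u x); rewrite /sgnb /=; lia.
Qed.

Lemma frak_f_five_valued {r : nat} (a h1 h2 : bvec r -> bool) :
  five_valued_spectrum a ->
  five_valued_spectrum (fun x => a x (+) h1 x) ->
  five_valued_spectrum (fun x => a x (+) h2 x) ->
  five_valued_spectrum (fun x => a x (+) h1 x (+) h2 x) ->
  forall u v, five_valued (walsh2 (frak_f a h1 h2) u v) (r + 2).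
Proof.
move=> Ha Ha1 Ha2 Ha12 u v; rewrite walsh2_frak_f.
apply/five_valued_double/five_valued_sgnbM; move: (v ord0) (v ord_1) => [] [].
- exact: Ha12.
- by apply: (eq_five_valued_spectrum _ Ha1) => x; rewrite /= addbF.
- by apply: (eq_five_valued_spectrum _ Ha2) => x; rewrite /= addbF.
- by apply: (eq_five_valued_spectrum _ Ha) => x; rewrite /= !addbF.
Qed.

Lemma frak_f_five_valued_affine {r : nat} (a h1 h2 : bvec r -> bool) :
  is_affine h1 -> five_valued_spectrum a ->
  five_valued_spectrum (fun x => a x (+) h2 x) ->
  forall u v, five_valued (walsh2 (frak_f a h1 h2) u v) (r + 2).
Proof.
move=> h1_aff Ha Ha2; apply: frak_f_five_valued => //.
- exact: five_valued_spectrum_addr_affine.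
- apply: (eq_five_valued_spectrum _ (five_valued_spectrum_addr_affine h1_aff Ha2)) => x.
  by rewrite -addbA [h2 x (+) _]addbC addbA.
Qed.

Theorem mainTheorem6 (r : nat) (a h1 h2 : bvec r -> bool) :
  ~~ odd r ->
  ((is_bent a /\ (exists g, h1 = g /\ h2 = g /\ is_semibent (fun x => a x (+) g x)))
   \/ (is_bent a /\ is_affine h1 /\ is_semibent (fun x => a x (+) h2 x))
   \/ ((forall u, five_valued (walsh a u) r) /\ is_affine h1 /\ is_affine h2)
   \/ ((forall u, five_valued (walsh a u) r) /\ is_affine h1 /\
       (is_bent (fun x => a x (+) h2 x) \/ is_semibent (fun x => a x (+) h2 x)))) ->
  forall (u : bvec r) (v : bvec 2),
    five_valued (walsh2 (frak_f a h1 h2) u v) (r + 2).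
Proof.
move=> _ [[/bent_five_valued_spectrum Ha [g [-> [-> /semibent_five_valued_spectrum Hag]]]]
        |[[/bent_five_valued_spectrum Ha [h1_aff /semibent_five_valued_spectrum Ha2]]
        |[[Ha [h1_aff h2_aff]]|[Ha [h1_aff Ha2]]]]].
- apply: frak_f_five_valued => //.
  by apply: (eq_five_valued_spectrum _ Ha) => x; rewrite -addbA addbb addbF.
- exact: frak_f_five_valued_affine.
- by apply: frak_f_five_valued_affine => //; apply: five_valued_spectrum_addr_affine.
- apply: frak_f_five_valued_affine => //.
  by case: Ha2; [apply: bent_five_valued_spectrum|apply: semibent_five_valued_spectrum].
Qed.
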